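(* Let $\mathcal{H}_{A_1},\mathcal{H}_{A_2}$ be finite-dimensional Hilbert spaces with fixed reference bases (and the product basis on $\mathcal{H}_{A_1}\otimes\mathcal{H}_{A_2}$). For all states $\rho_1$ on $\mathcal{H}_{A_1}$ and $\rho_2$ on $\mathcal{H}_{A_2}$, $$C_{\max}(\rho_1\otimes\rho_2)=C_{\max}(\rho_1)+C_{\max}(\rho_2).$$
   Context: $D_{\max}(\rho\|\sigma)=\min\{\lambda\ge0:\rho\leq2^\lambda\sigma\}$. $\mathcal{I}$ is the set of incoherent states (states diagonal in the reference basis), and the max-relative entropy of coherence is $C_{\max}(\rho)=\min_{\sigma\in\mathcal{I}}D_{\max}(\rho\|\sigma)$. *)

From HB Require Import structures.
From mathcomp Require Import all_boot all_order all_algebra.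
From mathcomp Require Import complex mxtens.
From mathcomp Require Import all_classical all_reals.
From mathcomp Require Import ereal exp.
Set Implicit Arguments. Unset Strict Implicit. Unset Printing Implicit Defensive.
Import Order.TTheory GRing.Theory Num.Theory.
Local Open Scope classical_set_scope.
Local Open Scope ring_scope.

Section Quantum.
Variable R : realType.
Local Notation C := (R[i]).

Definition adjmx m n (A : 'M[C]_(m, n)) : 'M[C]_(n, m) := (map_mx Num.conj A)^T.

Definition psd n (A : 'M[C]_n) : Prop :=
  forall v : 'cV[C]_n, 0 <= (adjmx v *m A *m v) 0 0.

Definition loewner n (A B : 'M[C]_n) : Prop := psd (B - A).

Definition is_state n (rho : 'M[C]_n) : Prop := psd rho /\ \tr rho = 1.

Definition incoherent n (sigma : 'M[C]_n) : Prop := is_state sigma /\ is_diag_mx sigma.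

Definition Dmax n (rho sigma : 'M[C]_n) : \bar R :=
  ereal_inf [set (l%:E) | l in
    [set l : R | 0 <= l /\ loewner rho (((2 : R) `^ l)%:C%C *: sigma)]].

Definition Cmax n (rho : 'M[C]_n) : \bar R :=
  ereal_inf [set Dmax rho sigma | sigma in [set s : 'M[C]_n | incoherent s]].

End Quantum.

From HB Require Import structures.
From mathcomp Require Import all_boot all_order all_algebra.
From mathcomp Require Import complex mxtens.
From mathcomp Require Import all_classical all_reals.
From mathcomp Require Import ereal exp.
From mathcomp Require Import ring lra.

(* Subadditivity: feasible pairs (sigma1, l1) and (sigma2, l2) for rho1 and
   rho2 give the feasible pair (sigma1 (x) sigma2, l1 + l2) for rho1 (x) rho2;
   positivity of tensor products comes from Gram factorisations [A = B^* B].
   Superadditivity: a state below a diagonal matrix D satisfies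
   [2 ^ Cmax rho <= tr D] (normalise D into an incoherent state).  If
   [rho1 (x) rho2 <= diag d] with [tr (diag d) = 2 ^ l], evaluating on product
   vectors [u (x) w] gives [<w, rho2 w> rho1 <= D_w] with D_w diagonal of trace
   [<w, M w>], M the marginal of d on the second factor.  Hence
   [2 ^ Cmax rho1 * rho2 <= M], and [2 ^ (Cmax rho1 + Cmax rho2) <= tr M = 2 ^ l]. *)

Set Implicit Arguments. Unset Strict Implicit. Unset Printing Implicit Defensive.
Import Order.TTheory GRing.Theory Num.Theory.
Local Open Scope classical_set_scope.
Local Open Scope ring_scope.

Section QuadraticForm.
Variable R : realType.
Local Notation C := (R[i]).

Lemma adjmxE m n (A : 'M[C]_(m, n)) i j : adjmx A i j = (A j i)^*.
Proof. by rewrite !mxE. Qed.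

Lemma adjmxK m n (A : 'M[C]_(m, n)) : adjmx (adjmx A) = A.
Proof. by apply/matrixP => i j; rewrite !adjmxE conjCK. Qed.

Lemma adjmxM m n p (A : 'M[C]_(m, n)) (B : 'M[C]_(n, p)) :
  adjmx (A *m B) = adjmx B *m adjmx A.
Proof.
apply/matrixP => i j; rewrite adjmxE !mxE rmorph_sum; apply: eq_bigr => k _.
by rewrite !adjmxE rmorphM mulrC.
Qed.

Lemma adjmx_delta m n (i : 'I_m) (j : 'I_n) :
  adjmx (delta_mx i j : 'M[C]_(m, n)) = delta_mx j i.
Proof. by apply/matrixP => k l; rewrite !(adjmxE, mxE) rmorph_nat andbC. Qed.

Definition sform n (A : 'M[C]_n) (x y : 'cV[C]_n) : C := (adjmx x *m A *m y) 0 0.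

Definition qform n (A : 'M[C]_n) (v : 'cV[C]_n) : C := sform A v v.

Lemma sformE n (A : 'M[C]_n) x y :
  sform A x y = \sum_i \sum_j (x i 0)^* * A i j * y j 0.
Proof.
rewrite /sform mxE exchange_big; apply: eq_bigr => j _.
by rewrite mxE mulr_suml; apply: eq_bigr => i _; rewrite !mxE.
Qed.

Lemma sform_delta n (A : 'M[C]_n) i j :
  sform A (delta_mx i 0) (delta_mx j 0) = A i j.
Proof. by rewrite /sform adjmx_delta -rowE -colE !mxE. Qed.

Lemma qform_delta n (A : 'M[C]_n) i : qform A (delta_mx i 0) = A i i.
Proof. exact: sform_delta. Qed.

Lemma qformDr n (A : 'M[C]_n) x y c :
  qform A (x + c *: y) = qform A x + c * sform A x y + c^* * sform A y x
                         + c^* * c * qform A y.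
Proof.
rewrite /qform !sformE !mulr_sumr -!big_split; apply: eq_bigr => i _.
rewrite !mulr_sumr -!big_split; apply: eq_bigr => j _.
rewrite !mxE rmorphD rmorphM /=; ring.
Qed.

Lemma qformD n (A B : 'M[C]_n) v : qform (A + B) v = qform A v + qform B v.
Proof. by rewrite /qform /sform mulmxDr mulmxDl mxE. Qed.

Lemma qformB n (A B : 'M[C]_n) v : qform (A - B) v = qform A v - qform B v.
Proof. by rewrite /qform /sform mulmxBr mulmxBl !mxE. Qed.

Lemma qformZ n a (A : 'M[C]_n) v : qform (a *: A) v = a * qform A v.
Proof. by rewrite /qform /sform -scalemxAr -scalemxAl mxE. Qed.

Lemma qform_sum n I (r : seq I) (P : pred I) (F : I -> 'M[C]_n) v :
  qform (\sum_(i <- r | P i) F i) v = \sum_(i <- r | P i) qform (F i) v.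
Proof. by rewrite /qform /sform mulmx_sumr mulmx_suml summxE. Qed.

Lemma qform_adjmx n (A : 'M[C]_n) v : qform (adjmx A) v = (qform A v)^*.
Proof. by rewrite /qform /sform -[in RHS]adjmxE !adjmxM adjmxK mulmxA. Qed.

(* Polarization: on [e_i + c e_j] the cross terms are [c A i j + c^* A j i],
   so [c = 1] and [c = 'i] separate [A i j] from [A j i]. *)
Lemma qform_eq0 n (A : 'M[C]_n) : (forall v, qform A v = 0) -> A = 0.
Proof.
move=> A0; apply/matrixP => i j; rewrite mxE.
have Adiag k : A k k = 0 by rewrite -qform_delta.
have := A0 (delta_mx i 0 + 1 *: delta_mx j 0).
have := A0 (delta_mx i 0 + 'i *: delta_mx j 0).
rewrite !qformDr !sform_delta !qform_delta !Adiag conjC1 conjCi.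
move=> Ai A1; have : 'i * (A i j - A j i) = 0 by rewrite -Ai; ring.
move/eqP; rewrite mulf_eq0 (negbTE (neq0Ci _)) subr_eq0 => /eqP Aji.
have : A i j *+ 2 = 0 by rewrite -A1 Aji; ring.
by move/eqP; rewrite mulrn_eq0 => /eqP.
Qed.

End QuadraticForm.

Section Positivity.
Variable R : realType.
Local Notation C := (R[i]).

Lemma psdP n (A : 'M[C]_n) : psd A <-> forall v, 0 <= qform A v.
Proof. by split. Qed.

Lemma loewnerP n (A B : 'M[C]_n) :
  loewner A B <-> forall v, qform A v <= qform B v.
Proof.
split=> [/psdP AB v | AB]; last by apply/psdP => v; rewrite qformB subr_ge0.
by have := AB v; rewrite qformB subr_ge0.
Qed.

Lemma psd_diag_ge0 n (A : 'M[C]_n) i : psd A -> 0 <= A i i.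
Proof. by move=> /psdP pA; rewrite -qform_delta. Qed.

Lemma loewner_mxtrace n (A B : 'M[C]_n) : loewner A B -> \tr A <= \tr B.
Proof.
move=> AB; apply: ler_sum => i _.
by have := psd_diag_ge0 i AB; rewrite !mxE subr_ge0.
Qed.

Lemma psdD n (A B : 'M[C]_n) : psd A -> psd B -> psd (A + B).
Proof. by move=> /psdP pA /psdP pB; apply/psdP => v; rewrite qformD addr_ge0. Qed.

Lemma psdZ n a (A : 'M[C]_n) : 0 <= a -> psd A -> psd (a *: A).
Proof. by move=> a0 /psdP pA; apply/psdP => v; rewrite qformZ mulr_ge0. Qed.

Lemma loewner_psd n (A B : 'M[C]_n) : psd A -> loewner A B -> psd B.
Proof. by move=> pA AB; rewrite -(subrK A B); apply: psdD. Qed.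

Lemma qform_diag_mx n (d : 'rV[C]_n) v :
  qform (diag_mx d) v = \sum_i `|v i 0| ^+ 2 * d 0 i.
Proof.
rewrite /qform sformE; apply: eq_bigr => i _.
rewrite (bigD1 i) //= big1 => [|j ji]; last first.
  by rewrite !mxE eq_sym (negbTE ji) mulr0n mulr0 mul0r.
by rewrite !mxE eqxx mulr1n addr0 normCK; ring.
Qed.

Lemma psd_hermitian n (A : 'M[C]_n) : psd A -> adjmx A = A.
Proof.
move=> /psdP pA; apply/eqP; rewrite -subr_eq0; apply/eqP/qform_eq0 => v.
by rewrite qformB qform_adjmx geC0_conj ?subrr.
Qed.

Lemma psd_gram m n (B : 'M[C]_(m, n)) : psd (adjmx B *m B).
Proof.
apply/psdP => v; rewrite /qform /sform mulmxA -[_ *m B *m v]mulmxA -adjmxM.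
by rewrite mxE; apply: sumr_ge0 => i _; rewrite adjmxE mulrC mul_conjC_ge0.
Qed.

Lemma qform_conj_mx n (P A : 'M[C]_n) v :
  qform (adjmx P *m A *m P) v = qform A (P *m v).
Proof. by rewrite /qform /sform adjmxM !mulmxA. Qed.

Lemma adjmx_diag n (d : 'rV[C]_n) : adjmx (diag_mx d) = diag_mx (\row_i (d 0 i)^*).
Proof.
apply/matrixP => i j; rewrite !(adjmxE, mxE) eq_sym.
by case: eqP => [->|_]; rewrite ?conjC0 ?mulr1n ?mulr0n.
Qed.

Lemma adjmx_trmxC m n (A : 'M[C]_(m, n)) : adjmx A = (A ^t*)%sesqui.
Proof. by rewrite /adjmx map_trmx. Qed.

Lemma psd_gram_factor n (A : 'M[C]_n) : psd A -> exists B : 'M[C]_n, A = adjmx B *m B.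
Proof.
move=> pA; have normalA : A \is normalmx.
  by apply/normalmxP; rewrite -adjmx_trmxC psd_hermitian.
move/orthomx_spectralP: normalA.
set P := spectralmx A; set d := spectral_diag A.
have unitaryP : P *m adjmx P = 1%:M.
  by rewrite adjmx_trmxC; apply/unitarymxP/spectral_unitarymx.
rewrite invmx_unitary ?spectral_unitarymx // -adjmx_trmxC => defA.
have d0 k : 0 <= d 0 k.
  move/psdP: pA => /(_ (adjmx P *m delta_mx k 0)).
  by rewrite defA qform_conj_mx mulmxA unitaryP mul1mx qform_delta mxE eqxx.
pose s := \row_k sqrtC (d 0 k).
have ss : adjmx (diag_mx s) *m diag_mx s = diag_mx d.
  rewrite adjmx_diag mulmx_diag; congr diag_mx; apply/rowP => k.
  by rewrite !mxE geC0_conj ?sqrtC_ge0 // -expr2 sqrtCK.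
by exists (diag_mx s *m P); rewrite adjmxM mulmxA -[adjmx P *m _ *m _]mulmxA ss.
Qed.

Lemma adjmx_tens m n p r (A : 'M[C]_(m, n)) (B : 'M[C]_(p, r)) :
  adjmx (A *t B) = adjmx A *t adjmx B.
Proof.
apply/matrixP => i j.
case: (mxtens_indexP i) => i1 i2; case: (mxtens_indexP j) => j1 j2.
by rewrite tensmxE !adjmxE tensmxE rmorphM.
Qed.

Lemma psd_tens m n (A : 'M[C]_m) (B : 'M[C]_n) : psd A -> psd B -> psd (A *t B).
Proof.
move=> /psd_gram_factor[X ->] /psd_gram_factor[Y ->].
by rewrite -tensmx_mul -adjmx_tens; apply: psd_gram.
Qed.

End Positivity.

Section KroneckerProduct.

Lemma sum_mxtens_index (V : nmodType) m n (F : 'I_(m * n) -> V) :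
  \sum_k F k = \sum_i \sum_j F (mxtens_index (i, j)).
Proof.
rewrite pair_big /= (reindex (@mxtens_index m n)) /=; last first.
  by exists (@mxtens_unindex m n) => k _; rewrite (mxtens_indexK, mxtens_unindexK).
by apply: eq_bigr => -[i j].
Qed.

Variable K : comPzRingType.

Lemma tensmxBl m n p r (A B : 'M[K]_(m, n)) (D : 'M[K]_(p, r)) :
  (A - B) *t D = A *t D - B *t D.
Proof. by apply/matrixP => i j; rewrite !mxE mulrBl. Qed.

Lemma tensmxBr m n p r (A : 'M[K]_(m, n)) (B D : 'M[K]_(p, r)) :
  A *t (B - D) = A *t B - A *t D.
Proof. by apply/matrixP => i j; rewrite !mxE mulrBr. Qed.

Lemma tensmxZ m n p r a b (A : 'M[K]_(m, n)) (B : 'M[K]_(p, r)) :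
  (a *: A) *t (b *: B) = (a * b) *: (A *t B).
Proof. by apply/matrixP => i j; rewrite !mxE mulrACA. Qed.

Lemma mxtrace_tens m n (A : 'M[K]_m) (B : 'M[K]_n) : \tr (A *t B) = \tr A * \tr B.
Proof.
rewrite /mxtrace mulr_sum; apply: eq_bigr => k _.
by case: (mxtens_indexP k) => i j; rewrite tensmxE mxtens_indexK.
Qed.

Lemma is_diag_mx_tens m n (A : 'M[K]_m) (B : 'M[K]_n) :
  is_diag_mx A -> is_diag_mx B -> is_diag_mx (A *t B).
Proof.
move=> /is_diag_mxP dA /is_diag_mxP dB; apply/is_diag_mxP => i j.
case: (mxtens_indexP i) => i1 i2; case: (mxtens_indexP j) => j1 j2 ij.
rewrite tensmxE; have [e1|n1] := eqVneq i1 j1; last by rewrite dA ?mul0r.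
have [e2|n2] := eqVneq i2 j2; last by rewrite dB ?mulr0.
by move: ij; rewrite e1 e2 eqxx.
Qed.

(* [u *t w] has type ['M_(m * n, 1 * 1)], which is convertible to ['cV_(m * n)]. *)
Lemma tensmx_cVE m n (u : 'cV[K]_m) (w : 'cV[K]_n) i j :
  (u *t w : 'cV_(m * n)) (mxtens_index (i, j)) 0 = u i 0 * w j 0.
Proof. by rewrite mxE mxtens_indexK; congr (u _ _ * w _ _); apply: ord1. Qed.

Definition tens_slice m n (d : 'rV[K]_(m * n)) (i : 'I_m) : 'rV[K]_n :=
  \row_j d 0 (mxtens_index (i, j)).

End KroneckerProduct.

Section KroneckerForm.
Variable R : realType.
Local Notation C := (R[i]).

Lemma qform_tens m n (A : 'M[C]_m) (B : 'M[C]_n) (u : 'cV[C]_m) (w : 'cV[C]_n) :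
  qform (A *t B) (u *t w) = qform A u * qform B w.
Proof.
rewrite /qform !sformE sum_mxtens_index mulr_suml; apply: eq_bigr => i _.
under eq_bigr => j _ do rewrite sum_mxtens_index.
rewrite exchange_big mulr_suml; apply: eq_bigr => i' _.
rewrite mulr_sumr; apply: eq_bigr => j _.
rewrite mulr_sumr; apply: eq_bigr => j' _.
by rewrite tensmxE !tensmx_cVE rmorphM; ring.
Qed.

Lemma qform_diag_tens m n (d : 'rV[C]_(m * n)) (u : 'cV[C]_m) (w : 'cV[C]_n) :
  qform (diag_mx d) (u *t w) =
  qform (diag_mx (\row_i qform (diag_mx (tens_slice d i)) w)) u.
Proof.
rewrite !qform_diag_mx sum_mxtens_index; apply: eq_bigr => i _.
rewrite mxE qform_diag_mx mulr_sumr; apply: eq_bigr => j _.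
by rewrite tensmx_cVE mxE normrM exprMn mulrA.
Qed.

Lemma mxtrace_diag_slice m n (d : 'rV[C]_(m * n)) (w : 'cV[C]_n) :
  \tr (diag_mx (\row_i qform (diag_mx (tens_slice d i)) w)) =
  qform (diag_mx (\sum_i tens_slice d i)) w.
Proof.
by rewrite mxtrace_diag raddf_sum qform_sum; apply: eq_bigr => i _; rewrite mxE.
Qed.

Lemma mxtrace_diag_marginal m n (d : 'rV[C]_(m * n)) :
  \tr (diag_mx (\sum_i tens_slice d i)) = \tr (diag_mx d).
Proof.
rewrite !mxtrace_diag sum_mxtens_index exchange_big; apply: eq_bigr => j _.
by rewrite summxE; apply: eq_bigr => i _; rewrite mxE.
Qed.

Lemma loewner_tens m n (A1 B1 : 'M[C]_m) (A2 B2 : 'M[C]_n) :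
  psd A1 -> psd A2 -> loewner A1 B1 -> loewner A2 B2 ->
  loewner (A1 *t A2) (B1 *t B2).
Proof.
move=> pA1 pA2 AB1 AB2; rewrite /loewner.
have -> : B1 *t B2 - A1 *t A2 = (B1 - A1) *t B2 + A1 *t (B2 - A2).
  by rewrite tensmxBl tensmxBr addrA subrK.
by apply: psdD; apply: psd_tens => //; apply: loewner_psd AB2.
Qed.

End KroneckerForm.

Section PowR2.
Variable R : realType.

Lemma ler_powR2 (x y : R) : (2 `^ x <= 2 `^ y) = (x <= y).
Proof.
have ln2 : 0 < ln (2 : R) by rewrite ln_gt0 ?ltr1n.
have -> : (2 `^ x <= 2 `^ y) = (ln (2 `^ x) <= ln (2 `^ y)).
  by rewrite ler_ln ?posrE ?powR_gt0.
by rewrite !ln_powR ler_pM2r.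
Qed.

Lemma exists_powR2 (z : R[i]) : 1 <= z -> exists2 l : R, 0 <= l & (2 `^ l)%:C%C = z.
Proof.
move=> z1; have /ger0_real/RRe_real zE : 0 <= z by apply: le_trans ler01 z1.
move: z1; rewrite -{}zE lecR => x1.
have ln2 : 0 < ln (2 : R) by rewrite ln_gt0 ?ltr1n.
exists (ln (complex.Re z) / ln 2); first by rewrite divr_ge0 ?ln_ge0 ?ler1n.
by rewrite /powR pnatr_eq0 divfK ?gt_eqF // lnK // posrE (lt_le_trans ltr01).
Qed.

End PowR2.

Section MaxRelativeEntropyOfCoherence.
Variable R : realType.
Local Notation C := (R[i]).

Definition Cmax_feasible n (rho sigma : 'M[C]_n) (l : R) :=
  [/\ incoherent sigma, 0 <= l & loewner rho ((2 `^ l)%:C%C *: sigma)].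

Lemma Cmax_lbound n (rho sigma : 'M[C]_n) l :
  Cmax_feasible rho sigma l -> (Cmax rho <= l%:E)%E.
Proof.
case=> inc l0 AB; apply: (@le_trans _ _ (Dmax rho sigma)).
  by apply: ereal_inf_lbound; exists sigma.
by apply: ereal_inf_lbound; exists l.
Qed.

Lemma Cmax_lt n (rho : 'M[C]_n) x :
  (Cmax rho < x)%E -> exists sigma l, Cmax_feasible rho sigma l /\ (l%:E < x)%E.
Proof.
move=> /ereal_inf_lt [_ [sigma inc <-]] /ereal_inf_lt [_ [l [l0 AB] <-]] lx.
by exists sigma, l.
Qed.

Lemma lb_Cmax n (rho : 'M[C]_n) x :
  (forall sigma l, Cmax_feasible rho sigma l -> (x <= l%:E)%E) -> (x <= Cmax rho)%E.
Proof.
move=> xlb; apply: le_ereal_inf_tmp => _ [sigma inc <-].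
by apply: le_ereal_inf_tmp => _ [l [l0 AB] <-]; apply: (xlb sigma); split.
Qed.

Lemma Cmax_ge0 n (rho : 'M[C]_n) : (0 <= Cmax rho)%E.
Proof. by apply: lb_Cmax => sigma l [_ l0 _]; rewrite lee_fin. Qed.

Lemma state_diag_gt0 n (rho : 'M[C]_n) : is_state rho -> exists k, 0 < rho k k.
Proof.
case=> prho trho; have [k /andP[_ rkk]] : exists k, predT k && (0 < rho k k).
  apply: psumr_neq0P => [k _|]; first exact: psd_diag_ge0.
  by rewrite -/(\tr rho) trho; apply/eqP/oner_neq0.
by exists k.
Qed.

Lemma Cmax_diag_bound n (rho : 'M[C]_n) (d : 'rV[C]_n) a :
  is_state rho -> 0 < a -> loewner (a *: rho) (diag_mx d) ->
  exists c, Cmax rho = c%:E /\ a * (2 `^ c)%:C%C <= \tr (diag_mx d).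
Proof.
case=> prho trho a0 AB; set t := \tr (diag_mx d).
have pD : psd (diag_mx d) by apply: loewner_psd AB; apply: psdZ; rewrite ?ltW.
have a_le_t : a <= t by have := loewner_mxtrace AB; rewrite mxtraceZ trho mulr1.
have t0 : 0 < t by apply: lt_le_trans a_le_t.
have [l l0 lE] : exists2 l : R, 0 <= l & (2 `^ l)%:C%C = t / a.
  by apply: exists_powR2; rewrite ler_pdivlMr // mul1r.
have feasible : Cmax_feasible rho (t^-1 *: diag_mx d) l.
  split=> //; first split; first split.
  - by apply: psdZ; rewrite ?invr_ge0 ?ltW.
  - by rewrite mxtraceZ mulVf ?gt_eqF.
  - by rewrite -linearZ diag_mx_is_diag.
  - rewrite lE scalerA mulrAC divff ?gt_eqF // mul1r.
    rewrite /loewner -[rho](scalerK (a := a)) ?gt_eqF // -scalerBr.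
    by apply: psdZ; rewrite ?invr_ge0 ?ltW.
have Cmax_le_l := Cmax_lbound feasible.
have [c Ec] : exists c, Cmax rho = c%:E.
  by case: (Cmax rho) (Cmax_ge0 rho) Cmax_le_l => [c| |] //; exists c.
exists c; split=> //.
by rewrite -ler_pdivlMl // mulrC -lE lecR ler_powR2 -lee_fin -Ec.
Qed.

Lemma Cmax_feasible_tens m n (rho1 sigma1 : 'M[C]_m) (rho2 sigma2 : 'M[C]_n) l1 l2 :
  psd rho1 -> psd rho2 ->
  Cmax_feasible rho1 sigma1 l1 -> Cmax_feasible rho2 sigma2 l2 ->
  Cmax_feasible (rho1 *t rho2) (sigma1 *t sigma2) (l1 + l2).
Proof.
move=> p1 p2 [[[ps1 tr1] d1] l10 AB1] [[[ps2 tr2] d2] l20 AB2].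
split; first split; first split.
- exact: psd_tens.
- by rewrite mxtrace_tens tr1 tr2 mulr1.
- exact: is_diag_mx_tens.
- exact: addr_ge0.
- rewrite powRD ?pnatr_eq0 ?implybT // rmorphM -tensmxZ.
  exact: loewner_tens.
Qed.

Lemma Cmax_tens_le m n (rho1 : 'M[C]_m) (rho2 : 'M[C]_n) :
  psd rho1 -> psd rho2 -> (Cmax (rho1 *t rho2) <= Cmax rho1 + Cmax rho2)%E.
Proof.
move=> p1 p2; apply/lee_addgt0Pr => e e0.
have := Cmax_ge0 rho1; case E1 : (Cmax rho1) => [c1| |] // _;
have := Cmax_ge0 rho2; case E2 : (Cmax rho2) => [c2| |] // _;
  try by rewrite ?addye ?addey ?leey.
have [|s1 [l1 [f1 l1_lt]]] := @Cmax_lt _ rho1 (c1 + e / 2)%:E.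
  by rewrite E1 lte_fin; lra.
have [|s2 [l2 [f2 l2_lt]]] := @Cmax_lt _ rho2 (c2 + e / 2)%:E.
  by rewrite E2 lte_fin; lra.
apply: le_trans (Cmax_lbound (Cmax_feasible_tens p1 p2 f1 f2)) _.
by rewrite lee_fin; rewrite !lte_fin in l1_lt l2_lt; lra.
Qed.

Lemma Cmax_add_le_diag m n (rho1 : 'M[C]_m) (rho2 : 'M[C]_n) (d : 'rV[C]_(m * n)) l :
  is_state rho1 -> is_state rho2 -> loewner (rho1 *t rho2) (diag_mx d) ->
  \tr (diag_mx d) = (2 `^ l)%:C%C -> (Cmax rho1 + Cmax rho2 <= l%:E)%E.
Proof.
move=> s1 s2 AB trD; pose S w := diag_mx (\row_i qform (diag_mx (tens_slice d i)) w).
set M := diag_mx (\sum_i tens_slice d i).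
have slice_bound w : loewner (qform rho2 w *: rho1) (S w).
  apply/loewnerP => u; rewrite qformZ mulrC -qform_tens -qform_diag_tens.
  exact: (loewnerP _ _).1 AB _.
have [k r2kk] := state_diag_gt0 s2.
have [|c1 [E1 _]] := Cmax_diag_bound s1 _ (slice_bound (delta_mx k 0)).
  by rewrite qform_delta.
have M_bound : loewner ((2 `^ c1)%:C%C *: rho2) M.
  apply/loewnerP => w; rewrite qformZ -mxtrace_diag_slice.
  have := (psdP _).1 s2.1 w; rewrite le_eqVlt => /orP[/eqP q0 | q_gt0].
    by have := loewner_mxtrace (slice_bound w); rewrite -q0 scale0r mxtrace0 mulr0.
  have [c [Ec]] := Cmax_diag_bound s1 q_gt0 (slice_bound w).
  by rewrite mulrC; move: Ec; rewrite E1 => -[<-].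
have [|c2 [E2]] := Cmax_diag_bound s2 _ M_bound; first by rewrite ltcR powR_gt0.
rewrite mxtrace_diag_marginal trD -rmorphM lecR -powRD ?pnatr_eq0 ?implybT //.
by rewrite E1 E2 -EFinD lee_fin ler_powR2.
Qed.

Lemma Cmax_tens_ge m n (rho1 : 'M[C]_m) (rho2 : 'M[C]_n) :
  is_state rho1 -> is_state rho2 -> (Cmax rho1 + Cmax rho2 <= Cmax (rho1 *t rho2))%E.
Proof.
move=> s1 s2; apply: lb_Cmax => sigma l [[[_ tr_sigma] /diag_mxP[d sigmaE]] _ AB].
subst sigma.
apply: (Cmax_add_le_diag (d := (2 `^ l)%:C%C *: d)) => //.
  by rewrite linearZ.
by rewrite linearZ mxtraceZ tr_sigma mulr1.
Qed.

End MaxRelativeEntropyOfCoherence.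

Theorem corollary3 (R : realType) (n1 n2 : nat)
    (rho1 : 'M[R[i]]_n1) (rho2 : 'M[R[i]]_n2) :
  is_state rho1 -> is_state rho2 ->
  Cmax (rho1 *t rho2) = (Cmax rho1 + Cmax rho2)%E.
Proof.
move=> s1 s2; apply/le_anti/andP; split.
- exact: Cmax_tens_le s1.1 s2.1.
- exact: Cmax_tens_ge.
Qed.
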